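(* Assume $\Theta_0\neq\emptyset$. For a menu $\mathcal{F}\subseteq\bar{\mathcal{F}}$ (for which the standing attainment assumption holds), the equality $$\inf_{Q} U(Q,\mathcal{F}) \;=\; \sup_{\mathcal{F}'\subseteq\bar{\mathcal{F}}}\ \inf_{Q} U(Q,\mathcal{F}')$$ (maximin optimality; infima over all probability distributions $Q$ on $\Theta$, suprema over menus $\mathcal{F}'\subseteq\bar{\mathcal{F}}$ satisfying the attainment assumption) holds if and only if the menu $\mathcal{F}$ is incentive-aligned.
   Context: Let $\Theta$ be a set of types partitioned as $\Theta=\Theta_0\sqcup\Theta_1$ (null and nonnull types), and let $(P_\theta)_{\theta\in\Theta}$ be probability distributions on a measurable space $\mathcal{Z}$; $\mathbb{E}_\theta$ denotes expectation with $Z\sim P_\theta$. Fix a cost $C>0$. Fix an ambient class $\bar{\mathcal{F}}$ of measurable functions $f:\mathcal{Z}\to[0,\infty)$ (''license functions'') with $\mathbb{E}_\theta[f(Z)]<\infty$ for all $\theta$. A menu is a subset $\mathcal{F}\subseteq\bar{\mathcal{F}}$; it is assumed (attainment assumption) that for every $\theta$, $\sup_{f\in\mathcal{F}}\mathbb{E}_\theta[f(Z)]$ is attained when $\mathcal{F}\ne\emptyset$. Agent behavior: an agent of type $\theta$ offered $\mathcal{F}$ opts in ($I=1$) iff $\mathcal{F}\neq\emptyset$ and $\max_{f\in\mathcal{F}}\mathbb{E}_\theta[f(Z)]>C$, in which case it selects some maximizer $f^{\mathrm{br}}(\cdot;\theta,\mathcal{F})\in\arg\max_{f\in\mathcal{F}}\mathbb{E}_\theta[f(Z)]$;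 otherwise it opts out ($I=0$). The realized license is $L=f^{\mathrm{br}}(Z;\theta,\mathcal{F})$ with $Z\sim P_\theta$. The principal's utility is a function $u:\Theta\times[0,\infty)\to\mathbb{R}$ such that: for $\theta\in\Theta_1$, $u(\theta,\cdot)$ is nondecreasing and $0\le u(\theta,L)\le a_1$ for some constant $a_1<\infty$; for $\theta\in\Theta_0$, $u(\theta,\cdot)$ is nonincreasing, $u(\theta,0)\le 0$ and $u(\theta,L)<0$ for all $L>0$. For a probability distribution $Q$ on $\Theta$, the principal's expected utility is $U(Q,\mathcal{F})=\mathbb{E}_{\theta\sim Q}\big[\mathbb{E}_{Z\sim P_\theta}[u(\theta,L)\cdot I\mid\theta]\big]$ (measurability assumed as needed). A menu $\mathcal{F}$ is incentive-aligned if $\mathbb{E}_\theta[f(Z)]\le C$ for all $\theta\in\Theta_0$ and all $f\in\mathcal{F}$. *)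

From HB Require Import structures.
From mathcomp Require Import all_boot all_order all_algebra.
From mathcomp Require Import all_classical all_reals all_analysis measurable_realfun.
Set Implicit Arguments. Unset Strict Implicit. Unset Printing Implicit Defensive.
Import Order.TTheory GRing.Theory Num.Theory.
Local Open Scope classical_set_scope.
Local Open Scope ring_scope.

Section Screening.
Context {R : realType} {dZ dT : measure_display}
        {Z : measurableType dZ} {T : measurableType dT}.

Definition expect (P : probability Z R) (f : Z -> R) : \bar R :=
  (\int[P]_z (f z)%:E)%E.

Definition license_class (P : T -> probability Z R) (Fbar : set (Z -> R)) :=
  forall f, Fbar f ->
    [/\ measurable_fun setT f, (forall z, 0 <= f z) &
        forall th, (P th).-integrable setT (fun z => (f z)%:E)].

Definition attains (P : T -> probability Z R) (F : set (Z -> R)) :=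
  forall th, F !=set0 ->
    exists2 f, F f & forall g, F g -> (expect (P th) g <= expect (P th) f)%E.

Definition menu (P : T -> probability Z R) (Fbar : set (Z -> R))
  (F : set (Z -> R)) := F `<=` Fbar /\ attains P F.

Definition opts_in (P : T -> probability Z R) (C : R) (th : T)
  (F : set (Z -> R)) :=
  F !=set0 /\ (C%:E < ereal_sup [set expect (P th) f | f in F])%E.

Definition best_response (P : T -> probability Z R) (Fbar : set (Z -> R))
  (br : T -> set (Z -> R) -> Z -> R) :=
  forall F, menu P Fbar F -> forall th, F !=set0 ->
    F (br th F) /\
    forall g, F g -> (expect (P th) g <= expect (P th) (br th F))%E.

(* principal utility assumptions; Theta_1 = complement of Theta_0 *)
Definition utility_ok (Th0 : set T) (u : T -> R -> R) (a1 : R) :=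
  [/\ (forall th L L', ~ Th0 th -> 0 <= L -> L <= L' -> u th L <= u th L'),
      (forall th L, ~ Th0 th -> 0 <= L -> 0 <= u th L <= a1),
      (forall th L L', Th0 th -> 0 <= L -> L <= L' -> u th L' <= u th L),
      (forall th, Th0 th -> u th 0 <= 0) &
      (forall th L, Th0 th -> 0 < L -> u th L < 0)].

(* E_{Z ~ P_theta}[u(theta, L) * I | theta] *)
Definition cond_value (u : T -> R -> R) (P : T -> probability Z R) (C : R)
  (br : T -> set (Z -> R) -> Z -> R) (th : T) (F : set (Z -> R)) : \bar R :=
  if `[< opts_in P C th F >] then (\int[P th]_z (u th (br th F z))%:E)%E
  else 0%E.

Definition U (u : T -> R -> R) (P : T -> probability Z R) (C : R)
  (br : T -> set (Z -> R) -> Z -> R) (Q : probability T R)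
  (F : set (Z -> R)) : \bar R :=
  (\int[Q]_th cond_value u P C br th F)%E.

Definition worst_case (u : T -> R -> R) (P : T -> probability Z R) (C : R)
  (br : T -> set (Z -> R) -> Z -> R) (F : set (Z -> R)) : \bar R :=
  ereal_inf (range (fun Q : probability T R => U u P C br Q F)).

Definition incentive_aligned (Th0 : set T) (P : T -> probability Z R) (C : R)
  (F : set (Z -> R)) :=
  forall th f, Th0 th -> F f -> (expect (P th) f <= C%:E)%E.

End Screening.

From Pilot Require Import Defs.
From HB Require Import structures.
From mathcomp Require Import all_boot all_order all_algebra.
From mathcomp Require Import all_classical all_reals all_analysis measurable_realfun.
Set Implicit Arguments. Unset Strict Implicit. Unset Printing Implicit Defensive.
Import Order.TTheory GRing.Theory Num.Theory.
Local Open Scope classical_set_scope.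
Local Open Scope ring_scope.

(* The supremum over menus is 0: the empty menu guarantees 0, and every menu
   yields at most 0 against the point mass at a null type, since null types
   get nonpositive utility.  An incentive-aligned menu attracts no null type,
   so every type contributes a nonnegative value and the worst case is 0.
   Conversely, if some null type values some license above C, it opts in and
   receives a license with positive expectation; the principal's utility is
   then negative on a set of positive measure, so the point mass at that type
   drives the worst case below 0. *)

Section integral_sign.
Context {R : realType} {d : measure_display} {Z : measurableType d}.
Variable mu : {measure set Z -> \bar R}.

Lemma le0_integralN (f : Z -> R) : (forall z, f z <= 0) ->
  (\int[mu]_z (- f z)%:E = - \int[mu]_z (f z)%:E)%E.
Proof.
move=> f_le0.
have -> : (\int[mu]_z (f z)%:E = \int[mu]_z - (- f z)%:E)%E.
  by apply: eq_integral => z _; rewrite EFinN oppeK.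
by rewrite integral_ge0N ?oppeK // => z _; rewrite lee_fin oppr_ge0.
Qed.

Lemma integral_le0 (f : Z -> R) :
  (forall z, f z <= 0) -> (\int[mu]_z (f z)%:E <= 0)%E.
Proof.
move=> f_le0; rewrite -[leLHS]oppeK -le0_integralN // oppe_le0.
by rewrite integral_ge0 // => z _; rewrite lee_fin oppr_ge0.
Qed.

(* [v] is only monotone on [0, +oo[, so it is first clamped by [max x 0]. *)
Lemma measurable_comp_nonincreasing (g : Z -> R) (v : R -> R) :
  measurable_fun setT g -> (forall z, 0 <= g z) ->
  (forall L L', 0 <= L -> L <= L' -> v L' <= v L) ->
  measurable_fun setT (v \o g).
Proof.
move=> mg g_ge0 v_dec.
pose w (x : R) := v (Num.max x 0).
have -> : v \o g = w \o g by apply/funext => z; rewrite /w /= max_l.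
apply: measurableT_comp mg; apply: nonincreasing_measurable => // x y xy.
apply: v_dec; first by rewrite le_max lexx orbT.
by rewrite ge_max !le_max xy lexx !orbT.
Qed.

Lemma integral_comp_lt0 (g : Z -> R) (v : R -> R) :
  measurable_fun setT g -> (forall z, 0 <= g z) ->
  (0 < \int[mu]_z (g z)%:E)%E ->
  (forall L L', 0 <= L -> L <= L' -> v L' <= v L) ->
  v 0 <= 0 -> (forall L, 0 < L -> v L < 0) ->
  (\int[mu]_z (v (g z))%:E < 0)%E.
Proof.
move=> mg g_ge0 int_gt0 v_dec v0 v_lt0.
have v_le0 L : 0 <= L -> v L <= 0.
  by move=> L0; apply: le_trans (v_dec _ _ (lexx 0) L0) v0.
have mvg : measurable_fun setT (fun z => (v (g z))%:E).
  exact/measurable_EFinP/measurable_comp_nonincreasing.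
(* Otherwise [v \o g] vanishes a.e., hence so does [g]. *)
rewrite ltNge; apply/negP => int_ge0.
have : (\int[mu]_z `|(v (g z))%:E| = 0)%E.
  apply/eqP; rewrite eq_le integral_ge0 // andbT.
  rewrite (eq_integral (fun z => (- v (g z))%:E)); last first.
    by move=> z _; rewrite lee0_abs ?lee_fin ?v_le0.
  by rewrite le0_integralN ?oppe_le0 // => z; rewrite v_le0.
move=> /(ae_eq_integral_abs mu measurableT mvg) vg_ae0.
have g_ae0 : ae_eq mu setT (fun z => (g z)%:E) (cst 0%E).
  apply: filterS vg_ae0 => z /[apply] /= [[vgz0]]; congr EFin.
  apply/eqP; rewrite eq_le g_ge0 andbT leNgt; apply/negP => /v_lt0.
  by rewrite vgz0 ltxx.
move: int_gt0; rewrite (ge0_ae_eq_integral _ _ _ _ _ g_ae0) //.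
- by rewrite integral0 ltxx.
- exact/measurable_EFinP.
- by move=> z _; rewrite lee_fin.
Qed.
End integral_sign.

Section screening.
Context {R : realType} {dZ dT : measure_display}
        {Z : measurableType dZ} {T : measurableType dT}.
Variables (Th0 : set T) (P : T -> probability Z R) (C : R) (Fbar : set (Z -> R))
  (u : T -> R -> R) (a1 : R) (br : T -> set (Z -> R) -> Z -> R).
Hypothesis licenses : license_class P Fbar.
Hypothesis utility : utility_ok Th0 u a1.
Hypothesis best : best_response P Fbar br.
Hypothesis measurable_cond_value : forall F, menu P Fbar F ->
  measurable_fun setT (fun th => cond_value u P C br th F).

Local Notation cond_value := (cond_value u P C br).
Local Notation worst_case := (worst_case u P C br).

Lemma U_dirac F th : menu P Fbar F -> U u P C br \d_th F = cond_value th F.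
Proof.
move=> mF; rewrite /U integral_dirac ?diracT ?mul1e //.
exact: measurable_cond_value.
Qed.

Lemma worst_case_le_cond_value F th :
  menu P Fbar F -> (worst_case F <= cond_value th F)%E.
Proof.
by move=> mF; rewrite -U_dirac //; apply: ereal_inf_lbound; exists \d_th.
Qed.

Lemma worst_case_ge0 F :
  (forall th, 0 <= cond_value th F)%E -> (0 <= worst_case F)%E.
Proof.
by move=> cv_ge0; apply: le_ereal_inf_tmp => _ [Q _ <-]; apply: integral_ge0.
Qed.

Lemma best_response_ge0 F th z :
  menu P Fbar F -> F !=set0 -> 0 <= br th F z.
Proof.
move=> mF F_ne; have [Fbr _] := best mF th F_ne.
by have [_ br_ge0 _] := licenses (mF.1 _ Fbr).
Qed.

Lemma cond_value_le0 F th :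
  menu P Fbar F -> Th0 th -> (cond_value th F <= 0)%E.
Proof.
have [_ _ u0_dec u0_0 _] := utility.
move=> mF th_null; rewrite /Defs.cond_value; case: asboolP => // -[F_ne _].
apply: integral_le0 => z; apply: le_trans (u0_0 _ th_null).
by apply: u0_dec => //; exact: best_response_ge0.
Qed.

Lemma worst_case_le0 F th :
  menu P Fbar F -> Th0 th -> (worst_case F <= 0)%E.
Proof.
move=> mF th_null.
exact: le_trans (worst_case_le_cond_value _ mF) (cond_value_le0 mF th_null).
Qed.

Lemma menu_set0 : menu P Fbar set0.
Proof. by split; [exact: sub0set | move=> th [f []]]. Qed.

Lemma ereal_sup_worst_case : Th0 !=set0 ->
  ereal_sup [set worst_case F | F in menu P Fbar] = 0%E.
Proof.
move=> [th th_null]; apply/eqP; rewrite eq_le; apply/andP; split.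
  by apply: ge_ereal_sup => _ [F mF <-]; exact: worst_case_le0 th_null.
apply: le_ereal_sup_tmp; exists (worst_case set0).
  by exists set0; first exact: menu_set0.
apply: worst_case_ge0 => th'.
by rewrite /Defs.cond_value; case: asboolP => // -[[f []]].
Qed.

Lemma cond_value_ge0 F th :
  menu P Fbar F -> incentive_aligned Th0 P C F -> (0 <= cond_value th F)%E.
Proof.
have [_ u1_bound _ _ _] := utility.
move=> mF aligned; rewrite /Defs.cond_value; case: asboolP => // -[F_ne opt_in].
have [th_null|th_nonnull] := pselect (Th0 th).
  move: opt_in; rewrite ltNge => /negP[].
  by apply: ge_ereal_sup => _ [f Ff <-]; exact: aligned.
apply: integral_ge0 => z _; rewrite lee_fin.
by have /andP[] := u1_bound th _ th_nonnull (best_response_ge0 th z mF F_ne).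
Qed.

Lemma cond_value_lt0 F th f : 0 < C ->
  menu P Fbar F -> Th0 th -> F f -> (C%:E < expect (P th) f)%E ->
  (cond_value th F < 0)%E.
Proof.
have [_ _ u0_dec u0_0 u0_lt0] := utility.
move=> C_gt0 mF th_null Ff Ef_gt.
have F_ne : F !=set0 by exists f.
have [Fbr br_max] := best mF th F_ne.
have [mbr br_ge0 _] := licenses (mF.1 _ Fbr).
have opt_in : opts_in P C th F.
  split=> //; apply: lt_le_trans Ef_gt _.
  by apply: le_ereal_sup_tmp; exists (expect (P th) f) => //; exists f.
rewrite /Defs.cond_value; case: asboolP => // _.
apply: integral_comp_lt0 => //.
- apply: lt_le_trans (br_max _ Ff); apply: le_lt_trans Ef_gt.
  by rewrite lee_fin ltW.
- by move=> L L'; exact: u0_dec.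
- exact: u0_0.
- by move=> L; exact: u0_lt0.
Qed.

End screening.

Theorem theorem2p2 (R : realType) (dZ dT : measure_display)
  (Z : measurableType dZ) (T : measurableType dT)
  (Th0 : set T) (P : T -> probability Z R) (C : R) (Fbar : set (Z -> R))
  (u : T -> R -> R) (a1 : R) (br : T -> set (Z -> R) -> Z -> R)
  (F : set (Z -> R)) :
  0 < C ->
  license_class P Fbar ->
  utility_ok Th0 u a1 ->
  best_response P Fbar br ->
  (forall F', menu P Fbar F' ->
     measurable_fun setT (fun th : T => (cond_value u P C br th F' : \bar R))) ->
  Th0 !=set0 ->
  menu P Fbar F ->
  (worst_case u P C br F =
     ereal_sup [set worst_case u P C br F' | F' in menu P Fbar])
  <-> incentive_aligned Th0 P C F.
Proof.
move=> C_gt0 licenses utility best mcv Th0_ne mF.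
rewrite (ereal_sup_worst_case licenses utility best mcv Th0_ne).
split=> [wc_eq0 th f th_null Ff | aligned].
  rewrite leNgt; apply/negP => Ef_gt.
  have := worst_case_le_cond_value mcv th mF.
  rewrite wc_eq0 leNgt => /negP; apply.
  exact: (cond_value_lt0 licenses utility best C_gt0 mF th_null Ff Ef_gt).
have [th th_null] := Th0_ne.
apply/eqP; rewrite eq_le (worst_case_le0 licenses utility best mcv mF th_null).
apply: worst_case_ge0 => th'.
exact: (cond_value_ge0 licenses utility best th' mF aligned).
Qed.
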